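(* Let $\Gamma$ be a connected signed graph on $N$ vertices and, for real $t$, let $\mathcal{L}(t)=\mathcal{L}(\Gamma(t))$. The subspace $\mathbf{1}^\perp=\{v\in\mathbb{R}^N:\sum_i v_i=0\}$ is invariant under every $\mathcal{L}(t)$; let $\lambda_1(t),\dots,\lambda_{N-1}(t)$ be the (analytic) eigenvalue branches of $\mathcal{L}(t)$ restricted to $\mathbf{1}^\perp$. Then each $\lambda_i(t)$ is a non-decreasing function of $t$, and each crosses zero transversely: if $\lambda_i(t)=0$ then $\lambda_i'(t)>0$.
   Context: A signed graph $\Gamma$ is a finite simple undirected graph with vertex set $\{1,\dots,N\}$ in which every edge $\{i,j\}$ carries a nonzero real weight $\gamma_{ij}$, which may be of either sign. For real $t$, $\Gamma(t)$ is the weighted graph with the same edges and weights $\gamma_{ij}(t)=\gamma_{ij}$ if $\gamma_{ij}>0$ and $\gamma_{ij}(t)=t\gamma_{ij}$ if $\gamma_{ij}<0$. For a weighted graph with weights $w_{ij}$, its Laplacian is the symmetric matrix with off-diagonal entries $w_{ij}$ (zero for non-edges) and diagonal entries $-\sum_{k\ne i}w_{ik}$. $\mathbf{1}=(1,\dots,1)$. *)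

From HB Require Import structures.
From mathcomp Require Import all_boot all_order all_algebra.
From mathcomp Require Import all_classical all_reals all_analysis.
Set Implicit Arguments. Unset Strict Implicit. Unset Printing Implicit Defensive.
Import Order.TTheory GRing.Theory Num.Theory.
Local Open Scope ring_scope.

(* A signed graph on the vertex set 'I_N (= {1,..,N} shifted) is given by its
   weight function g : g i j <> 0 iff {i,j} is an edge, with weight g i j.
   Simple undirected graph: symmetric, no loops. *)
Definition signed_graph (R : realType) (N : nat) (g : 'I_N -> 'I_N -> R) : Prop :=
  (forall i j, g i j = g j i) /\ (forall i, g i i = 0).

Definition sg_connected (R : realType) (N : nat) (g : 'I_N -> 'I_N -> R) : Prop :=
  forall i j : 'I_N, connect (fun a b => g a b != 0) i j.

Definition gamma_t (R : realType) (N : nat) (g : 'I_N -> 'I_N -> R) (t : R) :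
  'I_N -> 'I_N -> R :=
  fun i j => if g i j < 0 then t * g i j else g i j.

Definition laplacian (R : realType) (N : nat) (w : 'I_N -> 'I_N -> R) : 'M[R]_N :=
  \matrix_(i, j) (if i == j then - \sum_(k | k != i) w i k else w i j).

Definition Lt (R : realType) (N : nat) (g : 'I_N -> 'I_N -> R) (t : R) : 'M[R]_N :=
  laplacian (gamma_t g t).

Definition eigen_branch (R : realType) (N : nat) (g : 'I_N -> 'I_N -> R)
  (lam : R -> R) (v : 'I_N -> R -> R) : Prop :=
  forall t : R,
    [/\ (\col_i v i t) != 0,
        \sum_i v i t = 0 &
        Lt g t *m (\col_i v i t) = lam t *: (\col_i v i t)].

From HB Require Import structures.
From mathcomp Require Import all_boot all_order all_algebra.
From mathcomp Require Import all_classical all_reals all_analysis.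
From mathcomp Require Import ring.
Set Implicit Arguments. Unset Strict Implicit. Unset Printing Implicit Defensive.
Import Order.TTheory GRing.Theory Num.Theory.
Local Open Scope ring_scope.

(* With the sign convention of [laplacian], x . L(w) x = -1/2 sum_ij w_ij (x_i - x_j)^2,
   so the Laplacian L^- of the negative edges has a nonnegative form and
   L(t) = L^+ + t L^-.  Symmetry of L(s) gives
   (lam s - lam t) <v s, v t> = (s - t) <v s, L^- v t>, and differentiating at s = t
   yields the Hellmann-Feynman formula lam'(t) |v t|^2 = <v t, L^- v t> >= 0.
   If moreover lam t = 0 = lam'(t), then v t is constant across negative edges, and
   L^+ v t = - t L^- v t makes it constant across positive edges as well; by
   connectivity v t is constant, which contradicts v t <> 0 and v t _|_ 1. *)

Section LaplacianForm.
Variables (R : comPzRingType) (N : nat).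
Implicit Types (w : 'I_N -> 'I_N -> R) (x y : 'I_N -> R).

Definition lap w y i := \sum_j w i j * (y j - y i).

Definition lap_form w x y := \sum_i x i * lap w y i.

Lemma lap_formE w x y : lap_form w x y =
  \sum_i \sum_j w i j * x i * y j - \sum_i \sum_j w i j * x i * y i.
Proof.
rewrite /lap_form /lap -sumrB; apply: eq_bigr => i _.
by rewrite mulr_sumr -sumrB; apply: eq_bigr => j _; ring.
Qed.

Lemma lap_formC w x y : (forall i j, w i j = w j i) ->
  lap_form w x y = lap_form w y x.
Proof.
move=> wC; rewrite !lap_formE; congr (_ - _).
  rewrite exchange_big; apply: eq_bigr => i _; apply: eq_bigr => j _.
  by rewrite wC; ring.
by apply: eq_bigr => i _; apply: eq_bigr => j _; ring.
Qed.

Lemma lap_form_sqr w x : (forall i j, w i j = w j i) ->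
  lap_form w x x *+ 2 = - \sum_i \sum_j w i j * (x i - x j) ^+ 2.
Proof.
move=> wC; rewrite mulr2n {2}(_ : lap_form w x x =
    \sum_i \sum_j w i j * x j * (x i - x j)).
  rewrite /lap_form /lap -big_split -sumrN /=; apply: eq_bigr => i _.
  by rewrite mulr_sumr -big_split -sumrN /=; apply: eq_bigr => j _; ring.
rewrite /lap_form /lap exchange_big; apply: eq_bigr => i _.
by rewrite mulr_sumr; apply: eq_bigr => j _; rewrite (wC j i); ring.
Qed.

Lemma lap_formN w x y : lap_form (fun i j => - w i j) x y = - lap_form w x y.
Proof.
rewrite /lap_form /lap -sumrN; apply: eq_bigr => i _.
by rewrite -mulrN -sumrN; congr (_ * _); apply: eq_bigr => j _; rewrite mulNr.
Qed.

End LaplacianForm.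

Section NonpositiveWeights.
Variables (R : realDomainType) (N : nat) (w : 'I_N -> 'I_N -> R).
Hypothesis wC : forall i j, w i j = w j i.
Hypothesis w_le0 : forall i j, w i j <= 0.

Lemma edge_term_ge0 (x : 'I_N -> R) i j : 0 <= - w i j * (x i - x j) ^+ 2.
Proof. by rewrite mulNr oppr_ge0 mulr_le0_ge0 ?w_le0 ?sqr_ge0. Qed.

Lemma lap_form_sqrE x :
  lap_form w x x *+ 2 = \sum_i \sum_j - w i j * (x i - x j) ^+ 2.
Proof.
rewrite lap_form_sqr // -sumrN; apply: eq_bigr => i _.
by rewrite -sumrN; apply: eq_bigr => j _; rewrite mulNr.
Qed.

Lemma lap_form_ge0 x : 0 <= lap_form w x x.
Proof.
rewrite -(pmulrn_lge0 _ (isT : (0 < 2)%N)) lap_form_sqrE.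
by apply: sumr_ge0 => i _; apply: sumr_ge0 => j _; apply: edge_term_ge0.
Qed.

Lemma lap_form_eq0_nonpos x :
  lap_form w x x = 0 -> forall i j, w i j != 0 -> x i = x j.
Proof.
move=> x0 i j wij.
have row_ge0 k : true -> 0 <= \sum_l - w k l * (x k - x l) ^+ 2.
  by move=> _; apply: sumr_ge0 => l _; apply: edge_term_ge0.
have := lap_form_sqrE x; rewrite x0 mul0rn => /esym/(psumr_eq0P row_ge0)/(_ i isT).
move/(psumr_eq0P (fun l _ => edge_term_ge0 x i l))/(_ j isT)/eqP.
by rewrite mulf_eq0 oppr_eq0 (negbTE wij) sqrf_eq0 subr_eq0 => /eqP.
Qed.

End NonpositiveWeights.

Lemma lap_form_eq0_nonneg (R : realDomainType) (N : nat)
    (w : 'I_N -> 'I_N -> R) (x : 'I_N -> R) :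
  (forall i j, w i j = w j i) -> (forall i j, 0 <= w i j) ->
  lap_form w x x = 0 -> forall i j, w i j != 0 -> x i = x j.
Proof.
move=> wC w_ge0 x0 i j wij.
apply: (@lap_form_eq0_nonpos _ _ (fun a b => - w a b)) => //.
- by move=> a b; rewrite wC.
- by move=> a b; rewrite oppr_le0.
- by rewrite lap_formN x0 oppr0.
- by rewrite oppr_eq0.
Qed.

Lemma laplacian_mul_col (R : realType) (N : nat) (w : 'I_N -> 'I_N -> R)
    (y : 'I_N -> R) i :
  w i i = 0 -> (laplacian w *m \col_k y k) i 0 = lap w y i.
Proof.
move=> wii; rewrite mxE /lap (bigD1 i) //= [RHS](bigD1 i) //= !mxE eqxx.
rewrite wii mul0r add0r mulNr mulr_suml -sumrN -big_split /=.
by apply: eq_bigr => j ji; rewrite !mxE eq_sym (negbTE ji); ring.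
Qed.

Section Derivatives.
Variable R : realType.

Lemma derivable_sum_mulr (N : nat) (v : 'I_N -> R -> R) (c : 'I_N -> R) t :
  (forall i, derivable (v i) t 1) -> derivable (fun s => \sum_i v i s * c i) t 1.
Proof.
move=> dv; have := @derivable_sum _ _ _ N (fun i s => v i s * c i) t 1.
rewrite fct_sumE; apply=> i.
have -> : (fun s => v i s * c i) = v i * cst (c i) by apply/funext.
exact: derivableM (dv i) (derivable_cst _ _ _).
Qed.

Lemma derive_factor_eq (f h b : R -> R) t :
  derivable f t 1 -> derivable h t 1 -> derivable b t 1 ->
  (forall s, (f s - f t) * h s = (s - t) * b s) -> 'D_1 f t * h t = b t.
Proof.
move=> df dh db fhb.
have dft : derivable (f - cst (f t)) t 1 := derivableB df (derivable_cst _ _ _).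
have did : derivable (id - cst t) t 1 :=
  derivableB (@derivable_id _ _ t 1) (derivable_cst _ _ _).
have -> : 'D_1 f t * h t = 'D_1 ((f - cst (f t)) * h) t.
  rewrite (deriveM dft dh) (deriveB df (derivable_cst _ _ _)) derive_cst subr0.
  by rewrite [(f - _) t]subrr scale0r add0r mulrC.
have -> : (f - cst (f t)) * h = (id - cst t) * b by apply/funext => s; apply: fhb.
rewrite (deriveM did db) (deriveB (@derivable_id _ _ t 1) (derivable_cst _ _ _)).
by rewrite derive_cst derive_id [(id - _) t]subrr scale0r add0r subr0 [_ *: _]mulr1.
Qed.

End Derivatives.

Definition pos_weights (R : realType) (N : nat) (g : 'I_N -> 'I_N -> R) i j :=
  if g i j < 0 then 0 else g i j.

Definition neg_weights (R : realType) (N : nat) (g : 'I_N -> 'I_N -> R) i j :=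
  if g i j < 0 then g i j else 0.

Lemma lap_gamma_t (R : realType) (N : nat) (g : 'I_N -> 'I_N -> R) s y i :
  lap (gamma_t g s) y i = lap (pos_weights g) y i + s * lap (neg_weights g) y i.
Proof.
rewrite /lap mulr_sumr -big_split; apply: eq_bigr => j _ /=.
by rewrite /gamma_t /pos_weights /neg_weights; case: ifP => _; ring.
Qed.

Section EigenBranch.
Variables (R : realType) (N : nat) (g : 'I_N -> 'I_N -> R).
Variables (lam : R -> R) (v : 'I_N -> R -> R).
Hypothesis g_graph : signed_graph g.
Hypothesis branch : eigen_branch g lam v.

Let gC : forall i j, g i j = g j i. Proof. by case: g_graph. Qed.

Lemma gamma_t_sym s i j : gamma_t g s i j = gamma_t g s j i.
Proof. by rewrite /gamma_t gC. Qed.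

Lemma pos_weights_sym i j : pos_weights g i j = pos_weights g j i.
Proof. by rewrite /pos_weights gC. Qed.

Lemma neg_weights_sym i j : neg_weights g i j = neg_weights g j i.
Proof. by rewrite /neg_weights gC. Qed.

Lemma pos_weights_ge0 i j : 0 <= pos_weights g i j.
Proof. by rewrite /pos_weights; case: ltP. Qed.

Lemma neg_weights_le0 i j : neg_weights g i j <= 0.
Proof. by rewrite /neg_weights; case: ltP => // /ltW. Qed.

Lemma branch_lap s i : lap (gamma_t g s) (v^~ s) i = lam s * v i s.
Proof.
have [_ _ /matrixP /(_ i 0)] := branch s.
rewrite laplacian_mul_col; last by case: g_graph => _ g0; rewrite /gamma_t g0 ltxx.
by rewrite !mxE.
Qed.

Lemma branch_difference s t :
  (lam s - lam t) * (\sum_i v i s * v i t) =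
  (s - t) * lap_form (neg_weights g) (v^~ s) (v^~ t).
Proof.
have lam_s : lam s * (\sum_i v i s * v i t) = lap_form (gamma_t g s) (v^~ s) (v^~ t).
  rewrite lap_formC; last exact: gamma_t_sym.
  by rewrite mulr_sumr; apply: eq_bigr => i _; rewrite branch_lap; ring.
have lam_t : lam t * (\sum_i v i s * v i t) = lap_form (gamma_t g t) (v^~ s) (v^~ t).
  by rewrite mulr_sumr; apply: eq_bigr => i _; rewrite branch_lap; ring.
rewrite mulrBl lam_s lam_t /lap_form -sumrB mulr_sumr; apply: eq_bigr => i _.
by rewrite !lap_gamma_t; ring.
Qed.

Lemma branch_derive t : derivable lam t 1 -> (forall i, derivable (v i) t 1) ->
  'D_1 lam t * (\sum_i v i t * v i t) =
  lap_form (neg_weights g) (v^~ t) (v^~ t).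
Proof.
move=> dlam dv.
apply: (@derive_factor_eq _ _ (fun s => \sum_i v i s * v i t)
  (fun s => lap_form (neg_weights g) (v^~ s) (v^~ t))) => //.
- exact: derivable_sum_mulr.
- exact: derivable_sum_mulr.
- by move=> s; apply: branch_difference.
Qed.

Lemma branch_sqnorm_gt0 t : 0 < \sum_i v i t * v i t.
Proof.
have [vt0 _ _] := branch t.
have sq_ge0 i : true -> 0 <= v i t * v i t by rewrite -expr2 sqr_ge0.
rewrite lt_def sumr_ge0 // andbT; apply: contra vt0 => /eqP/(psumr_eq0P sq_ge0) vt.
apply/eqP/matrixP => i j; rewrite !mxE.
by have /eqP := vt i isT; rewrite mulf_eq0 orbb => /eqP.
Qed.

Lemma branch_derive_ge0 t : derivable lam t 1 -> (forall i, derivable (v i) t 1) ->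
  0 <= 'D_1 lam t.
Proof.
move=> dlam dv; rewrite -(pmulr_lge0 _ (branch_sqnorm_gt0 t)) branch_derive //.
exact: lap_form_ge0 neg_weights_sym neg_weights_le0 _.
Qed.

Lemma branch_const_on_edges t :
  lam t = 0 -> lap_form (neg_weights g) (v^~ t) (v^~ t) = 0 ->
  forall a b, g a b != 0 -> v a t = v b t.
Proof.
move=> lam0 neg0 a b gab.
have pos0 : lap_form (pos_weights g) (v^~ t) (v^~ t) = 0.
  transitivity (- t * lap_form (neg_weights g) (v^~ t) (v^~ t)); last first.
    by rewrite neg0 mulr0.
  rewrite /lap_form mulr_sumr; apply: eq_bigr => i _.
  have /eqP := branch_lap t i; rewrite lap_gamma_t lam0 mul0r addr_eq0 => /eqP ->.
  ring.
case: (ltP (g a b) 0) => gab_sign.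
  apply: (lap_form_eq0_nonpos neg_weights_sym neg_weights_le0 neg0).
  by rewrite /neg_weights gab_sign.
apply: (lap_form_eq0_nonneg pos_weights_sym pos_weights_ge0 pos0).
by rewrite /pos_weights ltNge gab_sign.
Qed.

Lemma branch_not_const t : sg_connected g ->
  ~ (forall a b, g a b != 0 -> v a t = v b t).
Proof.
move=> conn vconst; have [vt0 vt_perp _] := branch t.
move/eqP: vt0; apply; apply/matrixP => i j; rewrite !mxE.
have vt_eq k : v k t = v i t.
  pose same := [pred k | v k t == v i t].
  have same_closed : closed_mem (fun a b => g a b != 0) (mem same).
    by move=> a b /vconst; rewrite !inE => ->.
  by apply/eqP; rewrite -[_ == _]/(k \in same) -(closed_connect same_closed (conn i k)) inE.
move: vt_perp; rewrite (eq_bigr (fun=> v i t)) => [|k _]; last exact: vt_eq.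
rewrite sumr_const card_ord => /eqP; rewrite mulrn_eq0 => /orP [/eqP N0|/eqP //].
by have := ltn_ord i; rewrite [X in (_ < X)%N]N0.
Qed.

End EigenBranch.

Theorem mainTheorem5 (R : realType) (N : nat) (g : 'I_N -> 'I_N -> R) :
  signed_graph g -> sg_connected g ->
  forall (lam : R -> R) (v : 'I_N -> R -> R),
    (forall t : R, derivable lam t 1) ->
    (forall (i : 'I_N) (t : R), derivable (v i) t 1) ->
    eigen_branch g lam v ->
    (forall s t : R, s <= t -> lam s <= lam t) /\
    (forall t : R, lam t = 0 -> 0 < derive1 lam t).
Proof.
move=> g_graph conn lam v dlam dv branch; split.
  move=> s t st; apply: (@ger0_derive1_ndecr R lam s t) => //.
  - move=> x _; rewrite derive1E.
    exact: branch_derive_ge0 g_graph branch x (dlam x) (dv^~ x).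
  - by apply: derivable_within_continuous => x _; apply: dlam.
move=> t lam0; rewrite derive1E -(pmulr_lgt0 _ (branch_sqnorm_gt0 branch t)).
rewrite (branch_derive g_graph branch (dlam t) (dv^~ t)) lt_def.
rewrite (lap_form_ge0 (neg_weights_sym g_graph) (neg_weights_le0 g)) andbT.
apply/eqP => neg0; apply: (branch_not_const branch conn).
exact: branch_const_on_edges g_graph branch t lam0 neg0.
Qed.
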